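(* Let $\varphi(u,v)$ be a (twice continuously differentiable) solution of the equation $$\varphi_{uu}+\varphi_{vv}+\frac{1}{v}\varphi_v=0$$ on an open set $D\subset\{(u,v)\in\mathbb{R}^2: v\neq 0\}$. Then for any pair of conjugate harmonic functions $u(x,y),v(x,y)$ on an open set $\Omega\subset\mathbb{R}^2$ (i.e. $u_x=v_y$, $u_y=-v_x$) with $(u(x,y),v(x,y))\in D$ for $(x,y)\in\Omega$, the function $\psi(x,y)=\varphi(u(x,y),v(x,y))$ satisfies $$(v\,\psi_x)_x+(v\,\psi_y)_y=0\quad\text{on }\Omega .$$ *)

From Stdlib Require Import Reals.
From Coquelicot Require Import Coquelicot.
Open Scope R_scope.

Definition unc (f : R -> R -> R) : R * R -> R := fun p => f (fst p) (snd p).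

Definition pDx (f : R -> R -> R) : R -> R -> R :=
  fun x y => Derive (fun t => f t y) x.
Definition pDy (f : R -> R -> R) : R -> R -> R :=
  fun x y => Derive (fun t => f x t) y.

Definition C2_on (U : R * R -> Prop) (f : R -> R -> R) : Prop :=
  forall x y, U (x, y) ->
    ex_derive (fun t => f t y) x /\ ex_derive (fun t => f x t) y /\
    ex_derive (fun t => pDx f t y) x /\ ex_derive (fun t => pDx f x t) y /\
    ex_derive (fun t => pDy f t y) x /\ ex_derive (fun t => pDy f x t) y /\
    continuous (unc f) (x, y) /\
    continuous (unc (pDx f)) (x, y) /\ continuous (unc (pDy f)) (x, y) /\
    continuous (unc (pDx (pDx f))) (x, y) /\ continuous (unc (pDy (pDx f))) (x, y) /\
    continuous (unc (pDx (pDy f))) (x, y) /\ continuous (unc (pDy (pDy f))) (x, y).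

(* With psi = phi o (u, v), the chain rule gives
   (v psi_x)_x + (v psi_y)_y
     = phi_u (u_x v_x + u_y v_y) + phi_v |grad v|^2
       + v (phi_uu |grad u|^2 + phi_vv |grad v|^2
            + (phi_uv + phi_vu) (u_x v_x + u_y v_y) + phi_u Lap u + phi_v Lap v).
   The Cauchy-Riemann equations make grad u and grad v orthogonal of equal length,
   and u, v are harmonic, so this collapses to
   |grad u|^2 v (phi_uu + phi_vv + phi_v / v), which vanishes by the equation for phi.
   No symmetry of the mixed partials of phi is needed. *)

From Stdlib Require Import Reals Lra.
From Coquelicot Require Import Coquelicot.
Open Scope R_scope.

Lemma open_locally_x (U : R * R -> Prop) x y :
  open U -> U (x, y) -> locally x (fun t => U (t, y)).
Proof.
  intros HU Hxy. apply (locally_2d_1d_const_y (fun a b => U (a, b))).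
  apply locally_2d_locally. apply (filter_imp U); [now intros [p q] | now apply HU].
Qed.

Lemma open_locally_y (U : R * R -> Prop) x y :
  open U -> U (x, y) -> locally y (fun t => U (x, t)).
Proof.
  intros HU Hxy. apply (locally_2d_1d_const_x (fun a b => U (a, b))).
  apply locally_2d_locally. apply (filter_imp U); [now intros [p q] | now apply HU].
Qed.

Lemma differentiable_pt_lim_partials (U : R * R -> Prop) (f : R -> R -> R) a b :
  open U -> U (a, b) ->
  (forall x y, U (x, y) -> ex_derive (fun t => f t y) x) ->
  ex_derive (fun t => f a t) b -> continuous (unc (pDx f)) (a, b) ->
  differentiable_pt_lim f a b (pDx f a b) (pDy f a b).
Proof.
  intros HU Hab Hx Hy Hc.
  apply filterdiff_differentiable_pt_lim.
  eapply filterdiff_ext_lin.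
  - apply (is_derive_filterdiff f a b (pDx f) (pDy f a b)); [| now apply Derive_correct | exact Hc].
    apply (filter_imp U); [| now apply HU].
    intros [p q] Hpq. now apply Derive_correct, Hx.
  - now intros [p q].
Qed.

Lemma C2_on_differentiable (U : R * R -> Prop) (f : R -> R -> R) a b :
  open U -> C2_on U f -> U (a, b) ->
  differentiable_pt_lim f a b (pDx f a b) (pDy f a b) /\
  differentiable_pt_lim (pDx f) a b (pDx (pDx f) a b) (pDy (pDx f) a b) /\
  differentiable_pt_lim (pDy f) a b (pDx (pDy f) a b) (pDy (pDy f) a b).
Proof.
  intros HU Hf Hab.
  destruct (Hf a b Hab) as (_ & Hfy & _ & Hfxy & _ & Hfyy & _ & Hcfx & _ & Hcfxx & _ & Hcfyx & _).
  repeat split; apply (differentiable_pt_lim_partials U); auto;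
    intros x y Hxy; apply (Hf x y Hxy).
Qed.

Lemma is_derive_comp_2d (f : R -> R -> R) (g h : R -> R) t lx ly dg dh :
  differentiable_pt_lim f (g t) (h t) lx ly ->
  is_derive g t dg -> is_derive h t dh ->
  is_derive (fun s => f (g s) (h s)) t (lx * dg + ly * dh).
Proof.
  intros Hf Hg Hh. apply is_derive_Reals.
  apply derivable_pt_lim_comp_2d; auto; now apply is_derive_Reals.
Qed.

Lemma pDx_comp (phi u v : R -> R -> R) x y :
  differentiable_pt_lim phi (u x y) (v x y)
    (pDx phi (u x y) (v x y)) (pDy phi (u x y) (v x y)) ->
  ex_derive (fun t => u t y) x -> ex_derive (fun t => v t y) x ->
  pDx (fun a b => phi (u a b) (v a b)) x y
    = pDx phi (u x y) (v x y) * pDx u x y + pDy phi (u x y) (v x y) * pDx v x y.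
Proof.
  intros Hphi Hu Hv. apply is_derive_unique.
  apply (is_derive_comp_2d phi (fun t => u t y) (fun t => v t y)); auto;
    now apply Derive_correct.
Qed.

Lemma pDy_comp (phi u v : R -> R -> R) x y :
  differentiable_pt_lim phi (u x y) (v x y)
    (pDx phi (u x y) (v x y)) (pDy phi (u x y) (v x y)) ->
  ex_derive (fun t => u x t) y -> ex_derive (fun t => v x t) y ->
  pDy (fun a b => phi (u a b) (v a b)) x y
    = pDx phi (u x y) (v x y) * pDy u x y + pDy phi (u x y) (v x y) * pDy v x y.
Proof.
  intros Hphi Hu Hv. apply is_derive_unique.
  apply (is_derive_comp_2d phi (fun t => u x t) (fun t => v x t)); auto;
    now apply Derive_correct.
Qed.

(* Along a line, [g], [h] are the restrictions of [u], [v] and [a], [b] those of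
   the corresponding partial derivatives of [u], [v]. *)
Lemma is_derive_weighted_chain (phi : R -> R -> R) (g h a b : R -> R) t dg dh da db :
  differentiable_pt_lim (pDx phi) (g t) (h t)
    (pDx (pDx phi) (g t) (h t)) (pDy (pDx phi) (g t) (h t)) ->
  differentiable_pt_lim (pDy phi) (g t) (h t)
    (pDx (pDy phi) (g t) (h t)) (pDy (pDy phi) (g t) (h t)) ->
  is_derive g t dg -> is_derive h t dh -> is_derive a t da -> is_derive b t db ->
  is_derive (fun s => h s * (pDx phi (g s) (h s) * a s + pDy phi (g s) (h s) * b s)) t
    (dh * (pDx phi (g t) (h t) * a t + pDy phi (g t) (h t) * b t)
     + h t * ((pDx (pDx phi) (g t) (h t) * dg + pDy (pDx phi) (g t) (h t) * dh) * a t
              + pDx phi (g t) (h t) * da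
              + (pDx (pDy phi) (g t) (h t) * dg + pDy (pDy phi) (g t) (h t) * dh) * b t
              + pDy phi (g t) (h t) * db)).
Proof.
  intros HX HY Hg Hh Ha Hb.
  assert (Hmult : forall (f1 f2 : R -> R) d1 d2, is_derive f1 t d1 -> is_derive f2 t d2 ->
            is_derive (fun s => f1 s * f2 s) t (d1 * f2 t + f1 t * d2)).
  { intros f1 f2 d1 d2 H1 H2. now apply (is_derive_mult f1 f2); [| | apply Rmult_comm]. }
  apply Hmult; [exact Hh |].
  replace (_ + _ + _ + _) with
    ((pDx (pDx phi) (g t) (h t) * dg + pDy (pDx phi) (g t) (h t) * dh) * a t
       + pDx phi (g t) (h t) * da
     + ((pDx (pDy phi) (g t) (h t) * dg + pDy (pDy phi) (g t) (h t) * dh) * b t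
       + pDy phi (g t) (h t) * db)) by ring.
  apply (is_derive_plus (fun s => pDx phi (g s) (h s) * a s) (fun s => pDy phi (g s) (h s) * b s));
    apply Hmult; auto; now apply is_derive_comp_2d.
Qed.

Lemma conjugate_harmonic_flux_identity
    (w ux uy vx vy uxx uyy vxx vyy p1 p2 p11 p12 p21 p22 : R) :
  w <> 0 -> p11 + p22 + / w * p2 = 0 ->
  uxx + uyy = 0 -> vxx + vyy = 0 -> ux = vy -> uy = - vx ->
  vx * (p1 * ux + p2 * vx)
    + w * ((p11 * ux + p12 * vx) * ux + p1 * uxx + (p21 * ux + p22 * vx) * vx + p2 * vxx)
  + (vy * (p1 * uy + p2 * vy)
    + w * ((p11 * uy + p12 * vy) * uy + p1 * uyy + (p21 * uy + p22 * vy) * vy + p2 * vyy))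
  = 0.
Proof.
  intros Hw Hphi Hu Hv -> ->.
  replace p11 with (- p22 - / w * p2) by lra.
  replace uxx with (- uyy) by lra. replace vxx with (- vyy) by lra.
  field. exact Hw.
Qed.

Section Composite.

Variables (D Om : R * R -> Prop) (phi u v : R -> R -> R).
Hypotheses (HD : open D) (HOm : open Om) (Hphi : C2_on D phi)
  (Hu : C2_on Om u) (Hv : C2_on Om v) (Hmap : forall x y, Om (x, y) -> D (u x y, v x y)).

Let psi := fun x y => phi (u x y) (v x y).

Lemma is_derive_weighted_pDx_comp x y : Om (x, y) ->
  is_derive (fun t => v t y * pDx psi t y) x
    (pDx v x y * (pDx phi (u x y) (v x y) * pDx u x y + pDy phi (u x y) (v x y) * pDx v x y)
     + v x y * ((pDx (pDx phi) (u x y) (v x y) * pDx u x y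
                 + pDy (pDx phi) (u x y) (v x y) * pDx v x y) * pDx u x y
               + pDx phi (u x y) (v x y) * pDx (pDx u) x y
               + (pDx (pDy phi) (u x y) (v x y) * pDx u x y
                 + pDy (pDy phi) (u x y) (v x y) * pDx v x y) * pDx v x y
               + pDy phi (u x y) (v x y) * pDx (pDx v) x y)).
Proof.
  intros Hxy.
  apply (is_derive_ext_loc (fun t => v t y *
    (pDx phi (u t y) (v t y) * pDx u t y + pDy phi (u t y) (v t y) * pDx v t y))).
  { apply (filter_imp (fun t => Om (t, y))); [| now apply open_locally_x].
    intros t Ht. unfold psi.
    rewrite (pDx_comp phi u v t y); [reflexivity | | apply (Hu t y Ht) | apply (Hv t y Ht)].
    now apply (C2_on_differentiable D), Hmap. }
  destruct (C2_on_differentiable D phi _ _ HD Hphi (Hmap x y Hxy)) as (_ & HX & HY).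
  destruct (Hu x y Hxy) as (Hux & _ & Huxx & _).
  destruct (Hv x y Hxy) as (Hvx & _ & Hvxx & _).
  apply (is_derive_weighted_chain phi (fun t => u t y) (fun t => v t y)
           (fun t => pDx u t y) (fun t => pDx v t y)); auto; now apply Derive_correct.
Qed.

Lemma is_derive_weighted_pDy_comp x y : Om (x, y) ->
  is_derive (fun t => v x t * pDy psi x t) y
    (pDy v x y * (pDx phi (u x y) (v x y) * pDy u x y + pDy phi (u x y) (v x y) * pDy v x y)
     + v x y * ((pDx (pDx phi) (u x y) (v x y) * pDy u x y
                 + pDy (pDx phi) (u x y) (v x y) * pDy v x y) * pDy u x y
               + pDx phi (u x y) (v x y) * pDy (pDy u) x y
               + (pDx (pDy phi) (u x y) (v x y) * pDy u x y
                 + pDy (pDy phi) (u x y) (v x y) * pDy v x y) * pDy v x y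
               + pDy phi (u x y) (v x y) * pDy (pDy v) x y)).
Proof.
  intros Hxy.
  apply (is_derive_ext_loc (fun t => v x t *
    (pDx phi (u x t) (v x t) * pDy u x t + pDy phi (u x t) (v x t) * pDy v x t))).
  { apply (filter_imp (fun t => Om (x, t))); [| now apply open_locally_y].
    intros t Ht. unfold psi.
    rewrite (pDy_comp phi u v x t); [reflexivity | | apply (Hu x t Ht) | apply (Hv x t Ht)].
    now apply (C2_on_differentiable D), Hmap. }
  destruct (C2_on_differentiable D phi _ _ HD Hphi (Hmap x y Hxy)) as (_ & HX & HY).
  destruct (Hu x y Hxy) as (_ & Huy & _ & _ & _ & Huyy & _).
  destruct (Hv x y Hxy) as (_ & Hvy & _ & _ & _ & Hvyy & _).
  apply (is_derive_weighted_chain phi (fun t => u x t) (fun t => v x t)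
           (fun t => pDy u x t) (fun t => pDy v x t)); auto; now apply Derive_correct.
Qed.

End Composite.

Theorem lemma1 (D Om : R * R -> Prop) (phi u v : R -> R -> R) :
  open D ->
  (forall a b, D (a, b) -> b <> 0) ->
  C2_on D phi ->
  (forall a b, D (a, b) ->
     pDx (pDx phi) a b + pDy (pDy phi) a b + / b * pDy phi a b = 0) ->
  open Om ->
  C2_on Om u -> C2_on Om v ->
  (forall x y, Om (x, y) ->
     pDx (pDx u) x y + pDy (pDy u) x y = 0 /\ pDx (pDx v) x y + pDy (pDy v) x y = 0) ->
  (forall x y, Om (x, y) ->
     pDx u x y = pDy v x y /\ pDy u x y = - pDx v x y) ->
  (forall x y, Om (x, y) -> D (u x y, v x y)) ->
  let psi := fun x y => phi (u x y) (v x y) in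
  forall x y, Om (x, y) ->
    ex_derive (fun t => v t y * pDx psi t y) x /\
    ex_derive (fun t => v x t * pDy psi x t) y /\
    Derive (fun t => v t y * pDx psi t y) x
      + Derive (fun t => v x t * pDy psi x t) y = 0.
Proof.
  intros HD Hnz Hphi Heq HOm Hu Hv Hlap HCR Hmap psi x y Hxy; subst psi.
  pose proof (is_derive_weighted_pDx_comp D Om phi u v HD HOm Hphi Hu Hv Hmap x y Hxy) as HX.
  pose proof (is_derive_weighted_pDy_comp D Om phi u v HD HOm Hphi Hu Hv Hmap x y Hxy) as HY.
  split; [eexists; exact HX |]. split; [eexists; exact HY |].
  etransitivity;
    [apply (f_equal2 Rplus); [exact (is_derive_unique _ _ _ HX) | exact (is_derive_unique _ _ _ HY)] |].
  apply conjugate_harmonic_flux_identity;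
    [apply (Hnz (u x y)), Hmap | apply Heq, Hmap | apply Hlap | apply Hlap | apply HCR | apply HCR]; exact Hxy.
Qed.
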